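(* Let $S=S^{\top}\in\mathbb{R}^{n\times n}$ be a nonnegative irreducible symmetric matrix and $K=-K^{\top}\in\mathbb{R}^{n\times n}$ a skew-symmetric matrix such that $A=S+K\ge0$ (entrywise). Let $Q$ be a real orthogonal matrix such that $Q^{\top}SQ=\mathrm{diag}(r(S),\lambda_2,\dots,\lambda_n)$. Then $t\mapsto r\big((1-t)A+tA^{\top}\big)$ is constant on $t\in[0,1]$ if and only if $$Q^{\top}KQ=\begin{pmatrix}0 & \mathbf{0}^{\top}\\ \mathbf{0} & K_2\end{pmatrix}$$ for some skew-symmetric $K_2=-K_2^{\top}\in\mathbb{R}^{(n-1)\times(n-1)}$, where $\mathbf{0}\in\mathbb{R}^{n-1}$ is the zero vector.
   Context: $r(M)$ denotes the spectral radius of $M$; $\lambda_2,\dots,\lambda_n$ are the remaining eigenvalues of $S$. *)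

From HB Require Import structures.
From mathcomp Require Import all_boot all_order all_algebra.
From mathcomp Require Import complex.
From mathcomp Require Import classical_sets reals.
Set Implicit Arguments. Unset Strict Implicit. Unset Printing Implicit Defensive.
Import Order.TTheory GRing.Theory Num.Theory.
Local Open Scope ring_scope.
Local Open Scope classical_set_scope.

Definition complexify (R : rcfType) m n (M : 'M[R]_(m, n)) : 'M[R[i]]_(m, n) :=
  map_mx (fun x : R => real_complex R x) M.

Definition spectral_radius (R : realType) n (M : 'M[R]_n) : R :=
  sup [set Normc.normc z | z in [set z | eigenvalue (complexify M) z]].

Definition symmetric_mx (R : pzRingType) n (M : 'M[R]_n) := M^T = M.
Definition skew_symmetric_mx (R : pzRingType) n (M : 'M[R]_n) := M^T = - M.
Definition nonnegmx (R : numDomainType) m n (M : 'M[R]_(m, n)) :=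
  forall i j, 0 <= M i j.
Definition orthogonalmx (R : pzRingType) n (Q : 'M[R]_n) := Q^T *m Q = 1%:M.

(* Irreducible: not reducible, i.e. there is no nonempty proper index set I
   with M i j = 0 for all i outside I and j inside I (equivalently no
   permutation P with P^T M P block upper triangular with nontrivial blocks). *)
Definition irreduciblemx (R : pzRingType) n (M : 'M[R]_n) :=
  forall I : {set 'I_n}, I != finset.set0 -> I != [set: 'I_n]%SET ->
    exists i j, [/\ i \notin I, j \in I & M i j != 0].

From HB Require Import structures.
From mathcomp Require Import all_boot all_order all_algebra.
From mathcomp Require Import complex.
From mathcomp Require Import classical_sets reals.
From mathcomp Require Import ring lra.
Import Order.TTheory GRing.Theory Num.Theory.
Local Open Scope ring_scope.
Set Implicit Arguments. Unset Strict Implicit.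

(* Along the segment, (1 - t) A + t A^T = S + (1 - 2t) K, which equals S at
   t = 1/2; so the spectral radius is constant iff it equals r(S) everywhere.
   The first column q of Q is an eigenvector of S for r(S), and the block
   condition says exactly that q K = 0.  By irreducibility, the eigenvectors
   of S for r(S) are the multiples of one positive Perron vector p.
   If p K = 0, then p is a positive eigenvector for r(S) of every nonnegative
   S + (1 - 2t) K, and a positive eigenvector of a nonnegative matrix forces
   its eigenvalue to be the spectral radius.  Conversely, if r(A) = r(S), the
   modulus w of an eigenvector of A for a dominant eigenvalue satisfies
   r(S) w <= w A entrywise.  Since w K w^T = 0, the Rayleigh quotient of S at
   w is at least r(S), so w is a Perron vector of S; then w K >= 0 together
   with w K w^T = 0 and w > 0 gives w K = 0. *)

Section SpectralRadius.
Variable R : realType.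
Local Open Scope complex_scope.

Lemma sup_eq_max (E : set R) e : E e -> (forall y, E y -> y <= e) -> sup E = e.
Proof.
move=> Ee ub; apply/eqP; rewrite eq_le; apply/andP; split.
  by apply: ge_sup; [exists e | move=> y /ub].
by apply: ub_le_sup => //; exists e => y /ub.
Qed.

Lemma normc_ge0 (z : R[i]) : 0 <= Normc.normc z.
Proof. by case: z => a b; exact: sqrtr_ge0. Qed.

Lemma normc_real (a : R) : Normc.normc a%:C = `|a|.
Proof. by rewrite /= expr0n /= addr0 sqrtr_sqr. Qed.

Lemma spectral_radius_max n (M : 'M[R]_n.+1) : exists l,
  [/\ eigenvalue (complexify M) l, spectral_radius M = Normc.normc l
    & forall l', eigenvalue (complexify M) l' -> Normc.normc l' <= Normc.normc l].
Proof.
have [rs rsE] := closed_field_poly_normal (char_poly (complexify M)).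
rewrite (monicP (char_poly_monic _)) scale1r in rsE.
have eigE l : eigenvalue (complexify M) l = (l \in rs).
  by rewrite eigenvalue_root_char rsE root_prod_XsubC.
have rs_gt0 : (0 < size rs)%N.
  by have := size_char_poly (complexify M); rewrite rsE size_prod_XsubC => -[->].
have [i _ imax] := @arg_maxP _ _ _ (Ordinal rs_gt0) xpredT
  (fun i : 'I_(size rs) => Normc.normc rs`_i) isT.
have lmax l' : eigenvalue (complexify M) l' -> Normc.normc l' <= Normc.normc rs`_i.
  rewrite eigE => l'rs; rewrite -(nth_index 0 l'rs).
  by apply: (imax (Ordinal _)); rewrite ?index_mem.
exists rs`_i; split => //; first by rewrite eigE mem_nth.
by apply: sup_eq_max => [|_ [l' /lmax le <-]//]; exists rs`_i; rewrite //= eigE mem_nth.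
Qed.

Lemma spectral_radius_attained n (M : 'M[R]_n.+1) :
  exists2 l, eigenvalue (complexify M) l & Normc.normc l = spectral_radius M.
Proof. by have [l [el -> _]] := spectral_radius_max M; exists l. Qed.

Lemma normc_eigenvalue_le n (M : 'M[R]_n.+1) l :
  eigenvalue (complexify M) l -> Normc.normc l <= spectral_radius M.
Proof. by have [l0 [_ -> l0max]] := spectral_radius_max M; apply: l0max. Qed.

Lemma spectral_radius_ge0 n (M : 'M[R]_n.+1) : 0 <= spectral_radius M.
Proof. by have [l _ <-] := spectral_radius_attained M; exact: normc_ge0. Qed.

Lemma eigenvalue_complexify N (M : 'M[R]_N) (v : 'rV[R]_N) a :
  v != 0 -> v *m M = a *: v -> eigenvalue (complexify M) a%:C.
Proof.
move=> vn0 vM; apply/eigenvalueP; exists (map_mx (real_complex R) v).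
  by rewrite /complexify -map_mxM vM map_mxZ.
by rewrite map_mx_eq0.
Qed.

Lemma eigenvalue_le_spectral_radius n (M : 'M[R]_n.+1) (v : 'rV[R]_n.+1) a :
  v != 0 -> v *m M = a *: v -> a <= spectral_radius M.
Proof.
move=> vn0 vM; have := normc_eigenvalue_le (eigenvalue_complexify vn0 vM).
by rewrite normc_real; apply: le_trans (ler_norm a).
Qed.

End SpectralRadius.

Section Nonnegative.
Local Open Scope complex_scope.
Variable R : realType.

Lemma eigenvector_norm_subinvariant (F : numDomainType) N (M : 'M[F]_N)
    (z : 'rV[F]_N) l :
  nonnegmx M -> z *m M = l *: z ->
  forall j, `|l| * `|z 0 j| <= (map_mx Num.norm z *m M) 0 j.
Proof.
move=> Mnn zM j; rewrite -normrM.
have := congr1 (fun v : 'rV_N => v 0 j) zM; rewrite !mxE => <-.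
apply: le_trans (ler_norm_sum _ _ _) _; apply: ler_sum => k _.
by rewrite !mxE normrM (ger0_norm (Mnn k j)).
Qed.

Lemma eigenvector_normc_subinvariant N (M : 'M[R]_N) (z : 'rV[R[i]]_N) l :
  nonnegmx M -> z *m complexify M = l *: z ->
  forall j, Normc.normc l * (map_mx (@Normc.normc R) z) 0 j
            <= (map_mx (@Normc.normc R) z *m M) 0 j.
Proof.
move=> Mnn zM j.
have Mnn' : nonnegmx (complexify M) by move=> i k; rewrite mxE lecR.
rewrite -lecR rmorphM /= mxE.
change ((Normc.normc l)%:C) with `|l|; change ((Normc.normc (z 0 j))%:C) with `|z 0 j|.
apply: le_trans (eigenvector_norm_subinvariant Mnn' zM j) _.
rewrite !mxE rmorph_sum le_eqVlt; apply/orP; left; apply/eqP/eq_bigr => k _.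
by rewrite !mxE rmorphM.
Qed.

Lemma subinvariant_le_eigenvalue n (B : 'M[R]_n.+1) (p w : 'rV[R]_n.+1) a r :
  nonnegmx B -> (forall j, 0 < p 0 j) -> p *m B = r *: p ->
  (forall j, 0 <= w 0 j) -> w != 0 -> (forall j, a * w 0 j <= (w *m B) 0 j) ->
  a <= r.
Proof.
(* Compare w with the least multiple of p that dominates it. *)
move=> Bnn p_gt0 pB w_ge0 wn0 wB.
have [j1 _ j1max] := @arg_maxP _ _ _ ord0 xpredT
  (fun j : 'I_n.+1 => w 0 j / p 0 j) isT.
pose m := w 0 j1 / p 0 j1.
have w_le k : w 0 k <= m * p 0 k by rewrite -ler_pdivrMr //; exact: j1max.
have w_j1 : 0 < w 0 j1.
  rewrite lt_def w_ge0 andbT; apply: contra wn0 => /eqP w_j10.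
  apply/eqP/rowP => k; apply/eqP; rewrite mxE eq_le w_ge0 andbT.
  by have := w_le k; rewrite /m w_j10 mul0r mul0r.
rewrite -(ler_pM2r w_j1); apply: le_trans (wB j1) _.
have -> : r * w 0 j1 = m * (p *m B) 0 j1.
  by rewrite pB mxE mulrCA /m divfK ?gt_eqF.
rewrite !mxE mulr_sumr; apply: ler_sum => k _.
by rewrite mulrA ler_wpM2r.
Qed.

Lemma spectral_radius_pos_eigenvector n (B : 'M[R]_n.+1) (p : 'rV[R]_n.+1) r :
  nonnegmx B -> (forall j, 0 < p 0 j) -> p *m B = r *: p ->
  spectral_radius B = r.
Proof.
move=> Bnn p_gt0 pB; apply/eqP; rewrite eq_le; apply/andP; split; last first.
  apply: eigenvalue_le_spectral_radius pB; apply/eqP => p0.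
  by have := p_gt0 ord0; rewrite p0 mxE ltxx.
have [l /eigenvalueP[z zB zn0] <-] := spectral_radius_attained B.
apply: (subinvariant_le_eigenvalue Bnn p_gt0 pB (w := map_mx (@Normc.normc R) z)).
- by move=> j; rewrite mxE normc_ge0.
- apply: contra zn0 => /eqP z0; apply/eqP/rowP => j.
  by have := congr1 (fun v : 'rV_n.+1 => v 0 j) z0; rewrite !mxE => /Normc.eq0_normc.
- exact: eigenvector_normc_subinvariant.
Qed.

End Nonnegative.

Definition qform (R : pzRingType) N (M : 'M[R]_N) (x : 'rV[R]_N) : R :=
  (x *m M *m x^T) 0 0.

Section QuadraticForm.
Variable R : realType.

Lemma qform_subinvariant N (M : 'M[R]_N) (w : 'rV[R]_N) a :
  (forall j, 0 <= w 0 j) -> (forall j, a * w 0 j <= (w *m M) 0 j) ->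
  a * (w *m w^T) 0 0 <= qform M w.
Proof.
move=> w_ge0 wM; rewrite /qform !mxE mulr_sumr; apply: ler_sum => j _.
by rewrite mulrA mxE; apply: ler_wpM2r.
Qed.

Lemma qform_skew N (K : 'M[R]_N) (x : 'rV[R]_N) :
  skew_symmetric_mx K -> qform K x = 0.
Proof.
move=> Kskew; have : (x *m K *m x^T)^T = - (x *m K *m x^T).
  by rewrite !trmx_mul trmxK Kskew mulNmx mulmxN mulmxA.
by move/(congr1 (fun A : 'M_1 => A 0 0)); rewrite [LHS]mxE [RHS]mxE -/(qform K x) => ?; lra.
Qed.

Lemma skew_subinvariant_eq0 N (K : 'M[R]_N) (w : 'rV[R]_N) :
  skew_symmetric_mx K -> (forall j, 0 < w 0 j) -> (forall j, 0 <= (w *m K) 0 j) ->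
  w *m K = 0.
Proof.
move=> Kskew w_gt0 wK_ge0; have := qform_skew w Kskew; rewrite /qform mxE => q0.
have terms_ge0 k : true -> 0 <= (w *m K) 0 k * w^T k 0.
  by rewrite [w^T k 0]mxE mulr_ge0 ?wK_ge0 ?ltW.
apply/rowP => j; have /eqP := psumr_eq0P terms_ge0 q0 (i := j) isT.
by rewrite [RHS]mxE [w^T j 0]mxE mulf_eq0 (gt_eqF (w_gt0 j)) orbF => /eqP.
Qed.

End QuadraticForm.

Section Rayleigh.
Variables (R : realType) (N : nat) (S Q : 'M[R]_N) (d : 'rV[R]_N) (r : R).
Hypotheses (Qorth : orthogonalmx Q) (Sdiag : Q^T *m S *m Q = diag_mx d).
Hypothesis d_le : forall i, d 0 i <= r.

Let QQt : Q *m Q^T = 1%:M. Proof. exact: mulmx1C. Qed.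

Let SE : S = Q *m diag_mx d *m Q^T.
Proof. by rewrite -Sdiag !mulmxA QQt mul1mx -mulmxA QQt mulmx1. Qed.

Let qformE (x : 'rV[R]_N) : qform S x = \sum_j d 0 j * (x *m Q) 0 j ^+ 2.
Proof.
rewrite /qform SE !mulmxA -mulmxA -trmx_mul mxE.
by apply: eq_bigr => j _; rewrite mul_mx_diag !mxE mulrAC mulrC expr2 mulrA.
Qed.

Let normE (x : 'rV[R]_N) : (x *m x^T) 0 0 = \sum_j (x *m Q) 0 j ^+ 2.
Proof.
have -> : x *m x^T = x *m Q *m (x *m Q)^T.
  by rewrite trmx_mul mulmxA -(mulmxA x) QQt mulmx1.
by rewrite mxE; apply: eq_bigr => j _; rewrite !mxE expr2.
Qed.

Lemma qform_ge_eigenvector (x : 'rV[R]_N) : r * (x *m x^T) 0 0 <= qform S x -> x *m S = r *: x.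
Proof.
(* In the eigenbasis, r |x|^2 - x S x^T is a sum of nonnegative terms (r - d_j) y_j^2. *)
move=> rx_le; set y := x *m Q.
have gap_ge0 j : true -> 0 <= (r - d 0 j) * y 0 j ^+ 2.
  by rewrite mulr_ge0 ?sqr_ge0 ?subr_ge0.
have gap0 : \sum_j (r - d 0 j) * y 0 j ^+ 2 = 0.
  apply/eqP; rewrite eq_le sumr_ge0 // andbT.
  under eq_bigr do rewrite mulrBl.
  by rewrite sumrB -mulr_sumr -normE -qformE subr_le0.
have yd : y *m diag_mx d = r *: y.
  apply/rowP => j; rewrite mul_mx_diag mxE [RHS]mxE.
  have /eqP := psumr_eq0P gap_ge0 gap0 (i := j) isT.
  rewrite mulf_eq0 sqrf_eq0 subr_eq0 => /orP[/eqP <-|/eqP ->]; first by rewrite mulrC.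
  by rewrite mul0r mulr0.
by rewrite SE !mulmxA -/y yd -scalemxAl -mulmxA QQt mulmx1.
Qed.

End Rayleigh.

Section Irreducible.
Variables (R : realType) (n : nat) (M : 'M[R]_n.+1) (a : R).
Hypotheses (Mnn : nonnegmx M) (Mirr : irreduciblemx M).

Lemma nonneg_eigenvector_gt0 (w : 'rV[R]_n.+1) :
  (forall j, 0 <= w 0 j) -> w != 0 -> w *m M = a *: w -> forall j, 0 < w 0 j.
Proof.
(* On the zero set I of w, (w M)_k = 0 forces M i k = 0 for every i outside I. *)
move=> w_ge0 wn0 wM j; rewrite lt_def w_ge0 andbT; apply/negP => /eqP wj0.
pose I := [set k | w 0 k == 0].
have I_neq0 : I != finset.set0 by apply/set0Pn; exists j; rewrite inE wj0.
have I_neqT : I != [set: 'I_n.+1]%SET.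
  apply: contra wn0 => /eqP IT; apply/eqP/rowP => k.
  by have := finset.in_setT k; rewrite -IT inE mxE => /eqP.
have [i [k [+ + Mik]]] := Mirr I_neq0 I_neqT; rewrite !inE => wi /eqP wk.
have terms_ge0 l : true -> 0 <= w 0 l * M l k by rewrite mulr_ge0.
have sum0 : \sum_l w 0 l * M l k = 0.
  by have := congr1 (fun v : 'rV_n.+1 => v 0 k) wM; rewrite !mxE wk mulr0.
have /eqP := psumr_eq0P terms_ge0 sum0 (i := i) isT.
by rewrite mulf_eq0 (negbTE wi) (negbTE Mik).
Qed.

Lemma pos_eigenvector_unique (w v : 'rV[R]_n.+1) :
  (forall j, 0 < w 0 j) -> w *m M = a *: w -> v *m M = a *: v ->
  exists c, v = c *: w.
Proof.
(* With c the least ratio v_j / w_j, v - c w is a nonnegative eigenvector with a zero entry. *)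
move=> w_gt0 wM vM.
have [j1 _ j1min] := @arg_minP _ _ _ ord0 xpredT
  (fun j : 'I_n.+1 => v 0 j / w 0 j) isT.
exists (v 0 j1 / w 0 j1); set c := v 0 j1 / w 0 j1.
apply/eqP; rewrite -subr_eq0; apply/negPn/negP => x_neq0.
have x_ge0 j : 0 <= (v - c *: w) 0 j.
  by rewrite !mxE subr_ge0 -ler_pdivlMr //; exact: j1min.
have xM : (v - c *: w) *m M = a *: (v - c *: w).
  by rewrite mulmxBl -scalemxAl vM wM scalerBr !scalerA mulrC.
have := nonneg_eigenvector_gt0 x_ge0 x_neq0 xM j1.
by rewrite !mxE /c divfK ?gt_eqF // subrr ltxx.
Qed.

End Irreducible.

Section OrthogonalDiagonalization.
Variables (R : realType) (n : nat) (S Q : 'M[R]_n.+1) (d : 'rV[R]_n.+1).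
Hypotheses (Qorth : orthogonalmx Q) (Sdiag : Q^T *m S *m Q = diag_mx d).

Lemma row_orthogonal_neq0 i : row i Q^T != 0.
Proof.
apply/eqP => Qi0; have := congr1 (fun v : 'rV_n.+1 => v 0 i) (row_mul i Q^T Q).
by rewrite Qorth Qi0 mul0mx !mxE eqxx => /eqP; rewrite oner_eq0.
Qed.

Lemma row_orthogonal_eigenvector i : row i Q^T *m S = d 0 i *: row i Q^T.
Proof.
have QtS : Q^T *m S = diag_mx d *m Q^T.
  by rewrite -Sdiag -!mulmxA (mulmx1C Qorth) mulmx1.
by rewrite -row_mul QtS row_mul row_diag_mx -scalemxAl -rowE.
Qed.

Lemma diag_le_spectral_radius i : d 0 i <= spectral_radius S.
Proof.
exact: eigenvalue_le_spectral_radius (row_orthogonal_neq0 i) (row_orthogonal_eigenvector i).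
Qed.

Hypotheses (Snn : nonnegmx S) (Sirr : irreduciblemx S).
Let r := spectral_radius S.

Lemma perron_vector_of_eigenvector (q : 'rV[R]_n.+1) :
  q *m S = r *: q -> q != 0 ->
  exists2 p : 'rV[R]_n.+1, (forall j, 0 < p 0 j) & p *m S = r *: p.
Proof.
move=> qS qn0; set p := map_mx Num.norm q.
have p_ge0 j : 0 <= p 0 j by rewrite mxE.
have pS : p *m S = r *: p.
  apply: (qform_ge_eigenvector Qorth Sdiag diag_le_spectral_radius).
  apply: qform_subinvariant => // j; rewrite [p 0 j]mxE.
  by rewrite -(ger0_norm (spectral_radius_ge0 S)); exact: eigenvector_norm_subinvariant.
have pn0 : p != 0.
  apply: contra qn0 => /eqP p0; apply/eqP/rowP => j.
  by have := congr1 (fun v : 'rV_n.+1 => v 0 j) p0; rewrite !mxE => /normr0_eq0.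
by exists p => //; exact: (nonneg_eigenvector_gt0 Snn Sirr p_ge0 pn0 pS).
Qed.

Lemma common_perron_vector (K : 'M[R]_n.+1) :
  skew_symmetric_mx K -> nonnegmx (S + K) -> spectral_radius (S + K) = r ->
  exists w : 'rV[R]_n.+1, [/\ forall j, 0 < w 0 j, w *m S = r *: w & w *m K = 0].
Proof.
move=> Kskew Ann rA.
have [l /eigenvalueP[z zA zn0] lr] := spectral_radius_attained (S + K).
set w := map_mx (@Normc.normc R) z.
have w_ge0 j : 0 <= w 0 j by rewrite mxE normc_ge0.
have wn0 : w != 0.
  apply: contra zn0 => /eqP w0; apply/eqP/rowP => j.
  by have := congr1 (fun v : 'rV_n.+1 => v 0 j) w0; rewrite !mxE => /Normc.eq0_normc.
have wA j : r * w 0 j <= (w *m (S + K)) 0 j.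
  by rewrite -rA -lr; exact: eigenvector_normc_subinvariant.
have wS : w *m S = r *: w.
  apply: (qform_ge_eigenvector Qorth Sdiag diag_le_spectral_radius).
  have -> : qform S w = qform (S + K) w.
    have := qform_skew w Kskew; rewrite /qform => wKw0.
    by rewrite mulmxDr mulmxDl [RHS]mxE wKw0 addr0.
  exact: qform_subinvariant w_ge0 wA.
have w_gt0 := nonneg_eigenvector_gt0 Snn Sirr w_ge0 wn0 wS.
exists w; split; [exact: w_gt0 | exact: wS |].
apply: skew_subinvariant_eq0 Kskew w_gt0 _ => j.
by have := wA j; rewrite mulmxDr wS [X in _ <= X]mxE [(r *: w) 0 j]mxE lerDl.
Qed.

End OrthogonalDiagonalization.

Section SkewPerturbation.
Variable R : numFieldType.

Lemma convex_transpose_nonneg n (A : 'M[R]_n) t :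
  nonnegmx A -> 0 <= t <= 1 -> nonnegmx ((1 - t) *: A + t *: A^T).
Proof.
move=> Ann /andP[t_ge0 t_le1] i j; rewrite !mxE.
by rewrite addr_ge0 // mulr_ge0 ?subr_ge0.
Qed.

Lemma convex_transpose_sym_skew n (S K : 'M[R]_n) t :
  symmetric_mx S -> skew_symmetric_mx K ->
  (1 - t) *: (S + K) + t *: (S + K)^T = S + (1 - t *+ 2) *: K.
Proof.
move=> Ssym Kskew; rewrite [(S + K)^T]linearD /= Ssym Kskew.
by apply/matrixP => i j; rewrite !mxE; ring.
Qed.

Lemma convex_transpose_sym_skew_half n (S K : 'M[R]_n) :
  symmetric_mx S -> skew_symmetric_mx K ->
  (1 - 2^-1) *: (S + K) + 2^-1 *: (S + K)^T = S.
Proof.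
move=> Ssym Kskew; rewrite convex_transpose_sym_skew //.
have half2 : (2^-1 : R) *+ 2 = 1 by rewrite mulr2n [RHS](splitr 1) mul1r.
by rewrite half2 subrr scale0r addr0.
Qed.

Lemma skew_conj n (K Q : 'M[R]_n) :
  skew_symmetric_mx K -> skew_symmetric_mx (Q^T *m K *m Q).
Proof.
by rewrite /skew_symmetric_mx !trmx_mul trmxK => ->; rewrite mulNmx mulmxN mulmxA.
Qed.

Lemma skew_block_mxP n (M : 'M[R]_(1 + n)) : skew_symmetric_mx M ->
  row 0 M = 0 <-> exists K2 : 'M[R]_n, skew_symmetric_mx K2 /\ M = block_mx 0 0 0 K2.
Proof.
move=> Mskew; have Mji i j : M j i = - M i j.
  by have := congr1 (fun A : 'M_(1 + n) => A i j) Mskew; rewrite !mxE.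
have lshift0 (i : 'I_1) : lshift n i = 0 by apply: val_inj; case: i => -[].
split=> [M0 | [K2 [_ ->]]].
  have M0j j : M 0 j = 0 by have := congr1 (fun v : 'rV_(1 + n) => v 0 j) M0; rewrite !mxE.
  exists (drsubmx M); split.
    by apply/matrixP => i j; rewrite !mxE Mji.
  rewrite -{1}(submxK M); congr block_mx; apply/matrixP => i j;
    by rewrite !mxE ?lshift0 ?M0j // Mji M0j oppr0.
set B := block_mx (0 : 'M_1) 0 0 K2.
have -> : row 0 B = usubmx B.
  by apply/rowP => j; rewrite !mxE lshift0.
by rewrite /B block_mxEv col_mxKu row_mx0.
Qed.

End SkewPerturbation.

Lemma row_conj_orthogonal_eq0 (R : comNzRingType) n (K Q : 'M[R]_n) i :
  orthogonalmx Q -> row i (Q^T *m K *m Q) = 0 <-> row i Q^T *m K = 0.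
Proof.
move=> Qorth; rewrite !row_mul; split=> [qKQ0 | ->]; last by rewrite mul0mx.
by rewrite -[_ *m K]mulmx1 -(mulmx1C Qorth) mulmxA qKQ0 mul0mx.
Qed.

Lemma spectral_radius_convex_transpose (R : realType) n (S K : 'M[R]_n.+1)
    (p : 'rV[R]_n.+1) r t :
  symmetric_mx S -> skew_symmetric_mx K -> nonnegmx (S + K) ->
  (forall j, 0 < p 0 j) -> p *m S = r *: p -> p *m K = 0 -> 0 <= t <= 1 ->
  spectral_radius ((1 - t) *: (S + K) + t *: (S + K)^T) = r.
Proof.
move=> Ssym Kskew Ann p_gt0 pS pK0 t01.
apply: (spectral_radius_pos_eigenvector (convex_transpose_nonneg Ann t01) p_gt0).
by rewrite convex_transpose_sym_skew // mulmxDr -scalemxAr pK0 scaler0 [LHS]addr0.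
Qed.

Unset Implicit Arguments.
Theorem corollary4 (R : realType) (n : nat) (S K Q : 'M[R]_n.+1) :
  symmetric_mx S -> nonnegmx S -> irreduciblemx S ->
  skew_symmetric_mx K -> nonnegmx (S + K) ->
  orthogonalmx Q ->
  (exists d : 'rV[R]_n.+1,
      Q^T *m S *m Q = diag_mx d /\ d 0 0 = spectral_radius S) ->
  ((forall t1 t2 : R, 0 <= t1 <= 1 -> 0 <= t2 <= 1 ->
      spectral_radius ((1 - t1) *: (S + K) + t1 *: (S + K)^T)
      = spectral_radius ((1 - t2) *: (S + K) + t2 *: (S + K)^T))
   <->
   (exists K2 : 'M[R]_n, skew_symmetric_mx K2 /\
      Q^T *m K *m Q = block_mx 0 0 0 K2 :> 'M[R]_(1 + n))).
Proof.
move=> Ssym Snn Sirr Kskew Ann Qorth [d [Sdiag d0]].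
set r := spectral_radius S; set q := row 0 Q^T.
have qS : q *m S = r *: q by rewrite (row_orthogonal_eigenvector Qorth Sdiag) d0.
have qn0 : q != 0 := row_orthogonal_neq0 Qorth 0.
apply: (iff_trans _ (skew_block_mxP (skew_conj Q Kskew))).
apply: (iff_trans _ (iff_sym (row_conj_orthogonal_eq0 K 0 Qorth))).
split=> [Bt_const | qK0].
  have rA : spectral_radius (S + K) = r.
    have [zero01 half01] : 0 <= (0 : R) <= 1 /\ 0 <= (2^-1 : R) <= 1.
      by rewrite lexx ler01 invr_ge0 ler0n invf_le1 ?ler1n.
    have := Bt_const 0 2^-1 zero01 half01.
    by rewrite (convex_transpose_sym_skew_half Ssym Kskew) subr0 scale1r scale0r addr0.
  have [w [w_gt0 wS wK0]] := common_perron_vector Qorth Sdiag Snn Sirr Kskew Ann rA.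
  have [c qE] := pos_eigenvector_unique Snn Sirr w_gt0 wS qS.
  by rewrite -/q qE -scalemxAl wK0 scaler0.
have [p p_gt0 pS] := perron_vector_of_eigenvector Qorth Sdiag Snn Sirr qS qn0.
have [c qE] := pos_eigenvector_unique Snn Sirr p_gt0 pS qS.
have pK0 : p *m K = 0.
  have c_neq0 : c != 0 by apply: contraNneq qn0 => c0; rewrite qE c0 scale0r.
  by apply: (scalerI c_neq0); rewrite scalemxAl -qE qK0 scaler0.
have Bt_r := spectral_radius_convex_transpose Ssym Kskew Ann p_gt0 pS pK0.
by move=> t1 t2 /Bt_r -> /Bt_r ->.
Qed.
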